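(* Let $S$ be a Stone relation algebra and $\# : S\to\mathbb{N}\cup\{\infty\}$ a function. Consider the properties: (C1a) $\#\bot=0$; (C1b) $\forall x:\ \#x=0\iff x=\bot$; (C3) $\forall x:\ \#(x^{\smile})=\#x$; (C4a) $\forall x,y:\ \#x+\#y=\#(x\sqcup y)+\#(x\sqcap y)$; (C4b) $\forall x,y:\ x\sqsubseteq y\implies \#x\le\#y$; (C5a) $\forall x,y,z$ with $x$ univalent: $\#(x^{\smile}y\sqcap z)\le\#(xz\sqcap y)$; (C5b) $\forall x,y,z$ with $x$ univalent: $\#(x\sqcap yz^{\smile})\le\#(xz\sqcap y)$; (C5c) $\forall x,y$ with $x$ univalent: $\#(yx)\le\#y$; (C5d) $\forall x,y$ with $x$ univalent: $\#(x\sqcap y\top)\le\#y$; (C5e) $\forall x,y$ with $x$ univalent: $\#(x\sqcap yy^{\smile})\le\#y$; (C6a) $\forall x:\ \#(1\sqcap xx^{\smile})\le\#x$; (C6b) $\forall x:\ \#(1\sqcap x^{\smile}x)\le\#x$; (C7a) $\forall x:\ \#x=\#\top\iff x=\top$; (C7b) $\forall x:\ \#\top\le\#x\iff x=\top$. Then: 1. (C1b) implies (C1a). 2. (C3) and (C5c) together imply (C5a). 3. Each of (C5b) and (C5e) implies (C6a). 4. If (C3) holds, then (C6a) $\iff$ (C6b). 5. If (C3) and (C4b) hold, then (C5a) $\iff$ (C5c). 6. If (C4b) holds, then (C5b) $\iff$ (C5d), and (C5d) implies (C5e). 7. If (C4b) and (C5c) hold, then (C5b), (C5d), (C5e) and (C6a)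 are pairwise equivalent. 8. If (C4b) holds, then $\#x\le\#\top$ for every $x\in S$; in particular (C7a) $\iff$ (C7b). 9. If (C5b) and (C5c) hold, then $\#(xy)=\#x$ for every univalent $x$ and every mapping $y$. 10. If (C3), (C5b) and (C5c) hold, then $\#x=\#1$ for every point $x$. 11. If (C1a) and (C4a) hold, then $\#(x\sqcup y)=\#x+\#y$ whenever $x\sqcap y=\bot$. 12. If (C1a) and (C4a) hold and $X\subseteq S$ is finite and non-empty with $x\sqcap y=\bot$ for all distinct $x,y\in X$, then $\#\bigsqcup X=\sum_{x\in X}\#x$. 13. If (C1a) and (C4a) hold and $X\subseteq S$ is a finite non-empty set of atoms, then $\#\bigsqcup X=\sum_{x\in X}\#x$.
   Context: A Stone relation algebra is a structure $(S,\sqcup,\sqcap,\cdot,\overline{\,\cdot\,},{}^{\smile},\bot,\top,1)$ (write $xy$ for $x\cdot y$, $\overline{x}$ for the pseudocomplement, $x^{\smile}$ for the converse) such that: $(S,\sqcup,\sqcap,\bot,\top)$ is a bounded distributive lattice with order $x\sqsubseteq y\iff x\sqcup y=y$; $x\sqcap y=\bot\iff x\sqsubseteq\overline{y}$; $\overline{x}\sqcup\overline{\overline{x}}=\top$; $\cdot$ is associative with two-sided unit $1$, distributes over $\sqcup$ on both sides, and $\bot$ is a zero of $\cdot$; $x^{\smile\smile}=x$, $(xy)^{\smile}=y^{\smile}x^{\smile}$, $(x\sqcup y)^{\smile}=x^{\smile}\sqcup y^{\smile}$; $\overline{\overline{1}}=1$; $\overline{\overline{xy}}=\overline{\overline{x}}\,\overline{\overline{y}}$;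 $xy\sqcap z\sqsubseteq x(y\sqcap x^{\smile}z)$. $\bigsqcup X$ denotes the join of a finite non-empty set $X$. $x$ is univalent if $x^{\smile}x\sqsubseteq1$, total if $1\sqsubseteq xx^{\smile}$, a mapping if univalent and total, injective if $xx^{\smile}\sqsubseteq1$, surjective if $1\sqsubseteq x^{\smile}x$, a vector if $x\top=x$, a point if it is an injective, surjective vector. An atom is an element $x\neq\bot$ such that $\bot\neq y\sqsubseteq x$ implies $y=x$. Arithmetic in $\mathbb{N}\cup\{\infty\}$ is the usual one with $n+\infty=\infty+n=\infty$, $n\le\infty$. *)

From Stdlib Require Import List.
Import ListNotations.

Record StoneRA := {
  car :> Type;
  sup : car -> car -> car;
  inf : car -> car -> car;
  comp : car -> car -> car;
  pc : car -> car;              (* pseudocomplement x̄ *)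
  cv : car -> car;              (* converse x˘ *)
  bot : car;
  top : car;
  one : car;
  sup_assoc : forall x y z, sup x (sup y z) = sup (sup x y) z;
  sup_comm : forall x y, sup x y = sup y x;
  sup_idem : forall x, sup x x = x;
  inf_assoc : forall x y z, inf x (inf y z) = inf (inf x y) z;
  inf_comm : forall x y, inf x y = inf y x;
  inf_idem : forall x, inf x x = x;
  sup_absorb : forall x y, sup x (inf x y) = x;
  inf_absorb : forall x y, inf x (sup x y) = x;
  inf_sup_distr : forall x y z, inf x (sup y z) = sup (inf x y) (inf x z);
  sup_bot : forall x, sup bot x = x;
  inf_top : forall x, inf top x = x;
  pc_spec : forall x y, inf x y = bot <-> sup x (pc y) = pc y;
  stone : forall x, sup (pc x) (pc (pc x)) = top;
  comp_assoc : forall x y z, comp x (comp y z) = comp (comp x y) z;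
  comp_one_l : forall x, comp one x = x;
  comp_one_r : forall x, comp x one = x;
  comp_sup_l : forall x y z, comp (sup x y) z = sup (comp x z) (comp y z);
  comp_sup_r : forall x y z, comp x (sup y z) = sup (comp x y) (comp x z);
  comp_bot_l : forall x, comp bot x = bot;
  comp_bot_r : forall x, comp x bot = bot;
  cv_invol : forall x, cv (cv x) = x;
  cv_comp : forall x y, cv (comp x y) = comp (cv y) (cv x);
  cv_sup : forall x y, cv (sup x y) = sup (cv x) (cv y);
  pc_pc_one : pc (pc one) = one;
  pc_pc_comp : forall x y, pc (pc (comp x y)) = comp (pc (pc x)) (pc (pc y));
  dedekind : forall x y z,
    sup (inf (comp x y) z) (comp x (inf y (comp (cv x) z)))
    = comp x (inf y (comp (cv x) z))
}.

Arguments sup {s}. Arguments inf {s}. Arguments comp {s}. Arguments pc {s}.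
Arguments cv {s}. Arguments bot {s}. Arguments top {s}. Arguments one {s}.

Section Defs.
Context {S : StoneRA}.

Definition leS (x y : S) : Prop := sup x y = y.

Definition univalent (x : S) := leS (comp (cv x) x) one.
Definition total (x : S) := leS one (comp x (cv x)).
Definition mapping (x : S) := univalent x /\ total x.
Definition injective (x : S) := leS (comp x (cv x)) one.
Definition surjective (x : S) := leS one (comp (cv x) x).
Definition vector (x : S) := comp x top = x.
Definition point (x : S) := injective x /\ surjective x /\ vector x.
Definition atom (x : S) := x <> bot /\ forall y, y <> bot -> leS y x -> y = x.

(* join of a finite non-empty set given as a duplicate-free non-empty list *)
Definition bigsup (l : list S) : S := fold_right sup bot l.
End Defs.

Inductive enat := Fin (n : nat) | Inf.

Definition eadd (a b : enat) : enat :=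
  match a, b with Fin m, Fin n => Fin (m + n) | _, _ => Inf end.

Definition ele (a b : enat) : Prop :=
  match a, b with
  | Fin m, Fin n => m <= n
  | _, Inf => True
  | Inf, Fin _ => False
  end.

Definition esum {A} (f : A -> enat) (l : list A) : enat :=
  fold_right (fun x acc => eadd (f x) acc) (Fin 0) l.

Section Props.
Context {S : StoneRA} (c : S -> enat).

Definition C1a := c bot = Fin 0.
Definition C1b := forall x, c x = Fin 0 <-> x = bot.
Definition C3 := forall x, c (cv x) = c x.
Definition C4a := forall x y, eadd (c x) (c y) = eadd (c (sup x y)) (c (inf x y)).
Definition C4b := forall x y, leS x y -> ele (c x) (c y).
Definition C5a := forall x y z, univalent x ->
  ele (c (inf (comp (cv x) y) z)) (c (inf (comp x z) y)).
Definition C5b := forall x y z, univalent x ->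
  ele (c (inf x (comp y (cv z)))) (c (inf (comp x z) y)).
Definition C5c := forall x y, univalent x -> ele (c (comp y x)) (c y).
Definition C5d := forall x y, univalent x -> ele (c (inf x (comp y top))) (c y).
Definition C5e := forall x y, univalent x -> ele (c (inf x (comp y (cv y)))) (c y).
Definition C6a := forall x, ele (c (inf one (comp x (cv x)))) (c x).
Definition C6b := forall x, ele (c (inf one (comp (cv x) x))) (c x).
Definition C7a := forall x, c x = c top <-> x = top.
Definition C7b := forall x, ele (c top) (c x) <-> x = top.
End Props.

From Stdlib Require Import List Classical Lia.

(* Every implication between the counting axioms is a short calculation: one
   instantiates the hypothesis at well-chosen arguments and compares the two
   relations with the Dedekind law, the converse, and univalence, which turns
   x˘x <= 1 into the modular law (w ⊓ v x˘) x = w x ⊓ v.  Additivity over a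
   finite join of pairwise disjoint elements is induction on the list, since by
   distributivity an element disjoint from every member is disjoint from their
   join; distinct atoms are disjoint. *)

Section StoneRelationAlgebra.
Context {S : StoneRA}.
Implicit Types x y z w v : S.

Lemma leS_refl x : leS x x.
Proof. apply sup_idem. Qed.

Lemma leS_antisym x y : leS x y -> leS y x -> x = y.
Proof. unfold leS; intros Hxy Hyx. rewrite <- Hyx, sup_comm. exact Hxy. Qed.

Lemma leS_trans x y z : leS x y -> leS y z -> leS x z.
Proof. unfold leS; intros Hxy Hyz. rewrite <- Hyz, sup_assoc, Hxy. reflexivity. Qed.

Lemma leS_inf_eq x y : leS x y <-> inf x y = x.
Proof.
  unfold leS; split; intro H.
  - rewrite <- H. apply inf_absorb.
  - rewrite <- H, sup_comm, inf_comm. apply sup_absorb.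
Qed.

Lemma inf_leS_l x y : leS (inf x y) x.
Proof. apply leS_inf_eq. rewrite inf_comm, inf_assoc, inf_idem. reflexivity. Qed.

Lemma inf_leS_r x y : leS (inf x y) y.
Proof. rewrite inf_comm. apply inf_leS_l. Qed.

Lemma leS_inf x y z : leS z x -> leS z y -> leS z (inf x y).
Proof. rewrite !leS_inf_eq; intros Hx Hy. rewrite inf_assoc, Hx, Hy. reflexivity. Qed.

Lemma inf_top_r x : inf x top = x.
Proof. rewrite inf_comm. apply inf_top. Qed.

Lemma leS_top x : leS x top.
Proof. apply leS_inf_eq, inf_top_r. Qed.

Lemma inf_bot_r x : inf x bot = bot.
Proof. rewrite inf_comm. apply leS_inf_eq, sup_bot. Qed.

Lemma comp_leS_l x y z : leS x y -> leS (comp x z) (comp y z).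
Proof. unfold leS; intros H. rewrite <- comp_sup_l, H. reflexivity. Qed.

Lemma comp_leS_r x y z : leS x y -> leS (comp z x) (comp z y).
Proof. unfold leS; intros H. rewrite <- comp_sup_r, H. reflexivity. Qed.

Lemma comp_leS x y z w : leS x y -> leS z w -> leS (comp x z) (comp y w).
Proof.
  intros Hxy Hzw. apply leS_trans with (comp y z).
  - apply comp_leS_l, Hxy.
  - apply comp_leS_r, Hzw.
Qed.

Lemma cv_leS x y : leS x y -> leS (cv x) (cv y).
Proof. unfold leS; intros H. rewrite <- cv_sup, H. reflexivity. Qed.

Lemma cv_leS_inv x y : leS (cv x) (cv y) -> leS x y.
Proof. intros H. apply cv_leS in H. rewrite !cv_invol in H. exact H. Qed.

Lemma cv_inf x y : cv (inf x y) = inf (cv x) (cv y).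
Proof.
  apply leS_antisym.
  - apply leS_inf; apply cv_leS; [apply inf_leS_l | apply inf_leS_r].
  - apply cv_leS_inv. rewrite cv_invol.
    apply leS_inf; apply cv_leS_inv; rewrite cv_invol; [apply inf_leS_l | apply inf_leS_r].
Qed.

Lemma cv_one : cv (@one S) = one.
Proof.
  transitivity (comp (cv one) (cv (cv (@one S)))).
  - rewrite cv_invol, comp_one_r. reflexivity.
  - rewrite <- cv_comp, comp_one_r, cv_invol. reflexivity.
Qed.

Lemma cv_top : cv (@top S) = top.
Proof. apply leS_antisym; [apply leS_top |]. apply cv_leS_inv. rewrite cv_invol. apply leS_top. Qed.

Lemma top_comp_top : comp (@top S) top = top.
Proof.
  apply leS_antisym; [apply leS_top |].
  rewrite <- (comp_one_r _ top) at 1. apply comp_leS_r, leS_top.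
Qed.

Lemma dedekind_l x y z : leS (inf (comp x y) z) (comp x (inf y (comp (cv x) z))).
Proof. apply dedekind. Qed.

Lemma dedekind_r x y z : leS (inf (comp x y) z) (comp (inf x (comp z (cv y))) y).
Proof.
  apply cv_leS_inv. rewrite cv_inf, !cv_comp, cv_inf, cv_comp, cv_invol.
  pose proof (dedekind_l (cv y) (cv x) (cv z)) as H. rewrite cv_invol in H. exact H.
Qed.

Lemma univalent_one : univalent (@one S).
Proof. unfold univalent. rewrite cv_one, comp_one_l. apply leS_refl. Qed.

Lemma univalent_leS x w : leS w x -> univalent x -> univalent w.
Proof.
  intros Hwx Ux. apply leS_trans with (comp (cv x) x); [| exact Ux].
  apply comp_leS; [apply cv_leS |]; exact Hwx.
Qed.

Lemma comp_inf_univalent x w v : univalent x ->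
  comp (inf w (comp v (cv x))) x = inf (comp w x) v.
Proof.
  intros Ux. apply leS_antisym; [| apply dedekind_r].
  apply leS_inf; [apply comp_leS_l, inf_leS_l |].
  apply leS_trans with (comp v (comp (cv x) x)).
  - rewrite comp_assoc. apply comp_leS_l, inf_leS_r.
  - rewrite <- (comp_one_r _ v) at 2. apply comp_leS_r, Ux.
Qed.

Lemma comp_domain x : comp (inf one (comp x (cv x))) x = x.
Proof.
  apply leS_antisym.
  - apply leS_trans with (comp one x); [apply comp_leS_l, inf_leS_l |].
    rewrite comp_one_l. apply leS_refl.
  - pose proof (dedekind_r one x x) as H. rewrite comp_one_l, inf_idem in H. exact H.
Qed.

Lemma inf_one_vector_leS y :
  leS (inf one (comp (comp y top) (cv (comp y top)))) (comp y (cv y)).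
Proof.
  rewrite cv_comp, cv_top, comp_assoc, <- (comp_assoc _ y top top), top_comp_top.
  rewrite inf_comm. apply leS_trans with (comp (inf (comp y top) (comp one (cv (cv y)))) (cv y)).
  - apply dedekind_r.
  - rewrite comp_one_l, cv_invol. apply comp_leS_l, inf_leS_r.
Qed.

Lemma inf_comp_cv_leS x y z :
  leS (inf x (comp y (cv z))) (comp (inf (comp x z) y) top).
Proof.
  rewrite inf_comm. apply leS_trans with (comp (inf y (comp x (cv (cv z)))) (cv z)).
  - apply dedekind_r.
  - rewrite cv_invol, inf_comm. apply comp_leS_r, leS_top.
Qed.

Lemma total_leS_comp_cv x y : total y -> leS x (comp (comp x y) (cv y)).
Proof. intros Ty. rewrite <- comp_assoc, <- (comp_one_r _ x) at 1. apply comp_leS_r, Ty. Qed.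

Lemma inf_bigsup_bot x (l : list S) :
  (forall y, In y l -> inf x y = bot) -> inf x (bigsup l) = bot.
Proof.
  induction l as [| a l IH]; simpl; intros Hl; [apply inf_bot_r |].
  rewrite inf_sup_distr, Hl, IH, sup_idem; auto.
Qed.

Lemma atoms_disjoint x y : atom x -> atom y -> x <> y -> inf x y = bot.
Proof.
  intros [_ Ax] [_ Ay] Hxy. destruct (classic (inf x y = bot)) as [| Hnz]; [assumption |].
  exfalso. apply Hxy.
  rewrite <- (Ax _ Hnz (inf_leS_l x y)). apply Ay; [exact Hnz | apply inf_leS_r].
Qed.

End StoneRelationAlgebra.

Lemma ele_refl a : ele a a.
Proof. destruct a; simpl; auto. Qed.

Lemma ele_trans a b d : ele a b -> ele b d -> ele a d.
Proof. destruct a, b, d; simpl; tauto || lia. Qed.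

Lemma ele_antisym a b : ele a b -> ele b a -> a = b.
Proof. destruct a, b; simpl; intros; try tauto. f_equal; lia. Qed.

Lemma eadd_0_r a : eadd a (Fin 0) = a.
Proof. destruct a; simpl; auto. Qed.

Section Counting.
Context {S : StoneRA} (c : S -> enat).

Lemma C1a_of_C1b : C1b c -> C1a c.
Proof. intros H. apply H. reflexivity. Qed.

Lemma C5a_of_C3_C5c : C3 c -> C5c c -> C5a c.
Proof.
  intros H3 H5c x y z Ux.
  rewrite <- H3, cv_inf, cv_comp, cv_invol, <- (comp_inf_univalent x (cv y) (cv z) Ux).
  apply ele_trans with (c (inf (cv y) (comp (cv z) (cv x)))); [apply H5c, Ux |].
  rewrite <- cv_comp, <- cv_inf, H3, inf_comm. apply ele_refl.
Qed.

Lemma C6a_of_C5b : C5b c -> C6a c.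
Proof.
  intros H x. pose proof (H one x x univalent_one) as K.
  rewrite comp_one_l, inf_idem in K. exact K.
Qed.

Lemma C6a_of_C5e : C5e c -> C6a c.
Proof. intros H x. apply H, univalent_one. Qed.

Lemma C6a_iff_C6b : C3 c -> (C6a c <-> C6b c).
Proof.
  intros H3; split; intros H x; pose proof (H (cv x)) as K;
    rewrite cv_invol, H3 in K; exact K.
Qed.

Lemma C5c_of_C3_C4b_C5a : C3 c -> C4b c -> C5a c -> C5c c.
Proof.
  intros H3 H4 H5a x y Ux. pose proof (H5a x (cv y) top Ux) as K.
  rewrite inf_top_r, <- cv_comp, H3 in K.
  apply ele_trans with (1 := K). rewrite <- (H3 y). apply H4, inf_leS_r.
Qed.

Lemma C5d_of_C4b_C5b : C4b c -> C5b c -> C5d c.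
Proof.
  intros H4 H5b x y Ux. pose proof (H5b x y top Ux) as K. rewrite cv_top in K.
  apply ele_trans with (1 := K). apply H4, inf_leS_r.
Qed.

Lemma C5b_of_C4b_C5d : C4b c -> C5d c -> C5b c.
Proof.
  intros H4 H5d x y z Ux. apply ele_trans with (2 := H5d x _ Ux).
  apply H4, leS_inf; [apply inf_leS_l | apply inf_comp_cv_leS].
Qed.

Lemma C5e_of_C4b_C5d : C4b c -> C5d c -> C5e c.
Proof.
  intros H4 H5d x y Ux. apply ele_trans with (2 := H5d x y Ux).
  apply H4, leS_inf; [apply inf_leS_l |].
  apply leS_trans with (1 := inf_leS_r _ _). apply comp_leS_r, leS_top.
Qed.

(* With w := x ⊓ yT: #w = #((1 ⊓ ww˘) w) <= #(1 ⊓ ww˘) <= #(1 ⊓ yy˘) <= #y. *)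
Lemma C5d_of_C4b_C5c_C6a : C4b c -> C5c c -> C6a c -> C5d c.
Proof.
  intros H4 H5c H6a x y Ux. set (w := inf x (comp y top)).
  assert (Uw : univalent w) by (apply univalent_leS with x; [apply inf_leS_l | exact Ux]).
  rewrite <- (comp_domain w).
  apply ele_trans with (1 := H5c _ _ Uw), ele_trans with (2 := H6a y), H4.
  apply leS_inf; [apply inf_leS_l |].
  apply leS_trans with (2 := inf_one_vector_leS y).
  apply leS_inf; [apply inf_leS_l |].
  apply leS_trans with (1 := inf_leS_r _ _).
  apply comp_leS; [| apply cv_leS]; apply inf_leS_r.
Qed.

Lemma count_leS_top : C4b c -> forall x, ele (c x) (c top).
Proof. intros H4 x. apply H4, leS_top. Qed.

Lemma C7a_iff_C7b : C4b c -> (C7a c <-> C7b c).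
Proof.
  intros H4; split; intros H x; split; intro K.
  - apply H, ele_antisym; [apply count_leS_top |]; assumption.
  - subst; apply ele_refl.
  - apply H. rewrite K. apply ele_refl.
  - subst; reflexivity.
Qed.

Lemma count_comp_mapping : C5b c -> C5c c ->
  forall x y, univalent x -> mapping y -> c (comp x y) = c x.
Proof.
  intros H5b H5c x y Ux [Uy Ty]. apply ele_antisym; [apply H5c, Uy |].
  pose proof (H5b x (comp x y) y Ux) as K.
  rewrite inf_idem, (proj1 (leS_inf_eq _ _) (total_leS_comp_cv x y Ty)) in K. exact K.
Qed.

Lemma count_point : C3 c -> C5b c -> C5c c -> forall x, point x -> c x = c one.
Proof.
  intros H3 H5b H5c x [Ix [Sx _]].
  rewrite <- H3, <- (comp_one_l _ (cv x)). apply count_comp_mapping; auto.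
  - apply univalent_one.
  - split; unfold univalent, total; rewrite cv_invol; assumption.
Qed.

Lemma count_sup_disjoint : C1a c -> C4a c ->
  forall x y, inf x y = bot -> c (sup x y) = eadd (c x) (c y).
Proof. intros H1 H4 x y Hxy. rewrite H4, Hxy, H1, eadd_0_r. reflexivity. Qed.

Lemma count_bigsup_disjoint : C1a c -> C4a c -> forall X : list S, NoDup X ->
  (forall x y, In x X -> In y X -> x <> y -> inf x y = bot) ->
  c (bigsup X) = esum c X.
Proof.
  intros H1 H4 X. induction X as [| a X IH]; simpl; intros Hnd Hdisj; [exact H1 |].
  inversion_clear Hnd as [| ? ? Ha HndX].
  assert (Ha_bigsup : inf a (bigsup X) = bot).
  { apply inf_bigsup_bot. intros y Hy. apply Hdisj; simpl; auto. intros ->. contradiction. }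
  rewrite count_sup_disjoint, IH; auto.
Qed.

End Counting.

Theorem mainTheorem3 (S : StoneRA) (c : S -> enat) :
  (* 1 *) (C1b c -> C1a c) /\
  (* 2 *) (C3 c -> C5c c -> C5a c) /\
  (* 3 *) (C5b c -> C6a c) /\ (C5e c -> C6a c) /\
  (* 4 *) (C3 c -> (C6a c <-> C6b c)) /\
  (* 5 *) (C3 c -> C4b c -> (C5a c <-> C5c c)) /\
  (* 6 *) (C4b c -> (C5b c <-> C5d c) /\ (C5d c -> C5e c)) /\
  (* 7 *) (C4b c -> C5c c ->
             (C5b c <-> C5d c) /\ (C5b c <-> C5e c) /\ (C5b c <-> C6a c) /\
             (C5d c <-> C5e c) /\ (C5d c <-> C6a c) /\ (C5e c <-> C6a c)) /\
  (* 8 *) (C4b c -> (forall x : S, ele (c x) (c top)) /\ (C7a c <-> C7b c)) /\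
  (* 9 *) (C5b c -> C5c c -> forall x y : S, univalent x -> mapping y ->
             c (comp x y) = c x) /\
  (* 10 *) (C3 c -> C5b c -> C5c c -> forall x : S, point x -> c x = c one) /\
  (* 11 *) (C1a c -> C4a c -> forall x y : S, inf x y = bot ->
             c (sup x y) = eadd (c x) (c y)) /\
  (* 12 *) (C1a c -> C4a c -> forall X : list S, X <> nil -> NoDup X ->
             (forall x y, In x X -> In y X -> x <> y -> inf x y = bot) ->
             c (bigsup X) = esum c X) /\
  (* 13 *) (C1a c -> C4a c -> forall X : list S, X <> nil -> NoDup X ->
             (forall x, In x X -> atom x) ->
             c (bigsup X) = esum c X).
Proof.
  pose proof (C5d_of_C4b_C5b c). pose proof (C5b_of_C4b_C5d c).
  pose proof (C5e_of_C4b_C5d c). pose proof (C6a_of_C5e c).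
  pose proof (C5d_of_C4b_C5c_C6a c).
  split; [apply C1a_of_C1b |].
  split; [apply C5a_of_C3_C5c |].
  split; [apply C6a_of_C5b |].
  split; [apply C6a_of_C5e |].
  split; [apply C6a_iff_C6b |].
  split; [split; [apply C5c_of_C3_C4b_C5a | apply C5a_of_C3_C5c]; auto |].
  split; [tauto |].
  split; [tauto |].
  split; [split; [apply count_leS_top | apply C7a_iff_C7b]; auto |].
  split; [apply count_comp_mapping |].
  split; [apply count_point |].
  split; [apply count_sup_disjoint |].
  split; [intros HC1a HC4a X _; apply count_bigsup_disjoint; auto |].
  intros HC1a HC4a X _ Hnd Hat. apply count_bigsup_disjoint; auto.
  intros x y Hx Hy. apply atoms_disjoint; auto.
Qed.
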